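(* Let $Y$ be a finite-dimensional real or complex vector space, $\mathfrak g\subset\mathfrak{gl}(Y)$ a Lie subalgebra closed under $(S,T)\mapsto U_TS:=TST$, and $\omega$ a bilinear form on $Y$ with $\omega(Tx,y)+\omega(x,Ty)=0$ for all $T\in\mathfrak g$, $x,y\in Y$. Define $F\colon Y\to\mathfrak g^*$ by $\langle F(y),T\rangle=\tfrac12\omega(Ty,y)$, let $\alpha\colon\mathfrak g^*\to\mathfrak g$ and $f(y)=\alpha(F(y))y$. Let nonzero $b_1,\dots,b_s$ and $h>0$ be given and suppose $y_0,y_1,Y_1,\dots,Y_s\in Y$ satisfy \[ Y_i = y_0 + h\sum_{j=1}^{i-1} b_j f(Y_j) + \frac h2 b_i f(Y_i),\qquad y_1 = y_0 + h\sum_{i=1}^s b_i f(Y_i). \] Then $z_0=F(y_0)$, $Z_i=F(Y_i)$, $z_1=F(y_1)$ satisfy \[ Z_i = z_0 - h\sum_{j=1}^{i-1} b_j\operatorname{ad}^*_{\alpha(Z_j)}Z_j - \frac h2 b_i\operatorname{ad}^*_{\alpha(Z_i)}Z_i + \frac{h^2}{4}b_i^2U^*_{\alpha(Z_i)}Z_i,\qquad z_1 = z_0 - h\sum_{i=1}^s b_i\operatorname{ad}^*_{\alpha(Z_i)}Z_i . \]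
   Context: $\langle\cdot,\cdot\rangle$ is the pairing between $\mathfrak g^*$ and $\mathfrak g$; the bracket is $[S,T]=ST-TS$. $\operatorname{ad}^*_Tz\in\mathfrak g^*$ is defined by $\langle\operatorname{ad}^*_Tz,S\rangle=\langle z,[T,S]\rangle$ and $U^*_Tz$ by $\langle U^*_Tz,S\rangle=\langle z,TST\rangle$ for all $S\in\mathfrak g$. *)

From HB Require Import structures.
From mathcomp Require Import all_boot all_order all_algebra.
Set Implicit Arguments. Unset Strict Implicit. Unset Printing Implicit Defensive.
Import Order.TTheory GRing.Theory Num.Theory.
Local Open Scope ring_scope.

(* Y = 'cV[K]_n, gl(Y) = 'M[K]_n.  Elements of g^* are represented by
   functions 'M[K]_n -> K; two such represent the same element of g^*
   iff they agree on g.  The pairing <z,S> is z S. *)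

Definition momap (K : numFieldType) (n : nat)
  (omega : 'cV[K]_n -> 'cV[K]_n -> K) (y : 'cV[K]_n) : 'M[K]_n -> K :=
  fun T => 2^-1 * omega (T *m y) y.

Definition ad_star (K : numFieldType) (n : nat) (T : 'M[K]_n)
  (z : 'M[K]_n -> K) : 'M[K]_n -> K :=
  fun S => z (T *m S - S *m T).

Definition U_star (K : numFieldType) (n : nat) (T : 'M[K]_n)
  (z : 'M[K]_n -> K) : 'M[K]_n -> K :=
  fun S => z (T *m S *m T).

Definition vfield (K : numFieldType) (n : nat)
  (omega : 'cV[K]_n -> 'cV[K]_n -> K) (alpha : ('M[K]_n -> K) -> 'M[K]_n)
  (y : 'cV[K]_n) : 'cV[K]_n :=
  alpha (momap omega y) *m y.

From HB Require Import structures.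
From mathcomp Require Import all_boot all_order all_algebra.
From mathcomp Require Import ring.
Set Implicit Arguments. Unset Strict Implicit. Unset Printing Implicit Defensive.
Import Order.TTheory GRing.Theory Num.Theory.
Local Open Scope ring_scope.

(* For A skew with respect to omega, expanding the quadratic form gives
   F(Y + c A Y) = F(Y) - c ad^*_A F(Y) - c^2 U^*_A F(Y).  Write the method with
   the stage points W_k = y0 + h sum_(j<k) b_j f(Y_j) and c_i = h b_i / 2; then
   Y_i = W_i + c_i A_i Y_i and W_(i+1) = Y_i + c_i A_i Y_i with A_i = alpha(F(Y_i)).
   Hence F(W_(i+1)) - F(W_i) = -2 c_i ad^*_(A_i) F(Y_i), the U^* terms cancelling,
   and F(Y_i) = F(W_i) - c_i ad^* + c_i^2 U^*.  Telescoping gives both formulas. *)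

Lemma sum_ord_ltS (V : zmodType) (s : nat) (F : 'I_s -> V) (i : 'I_s) :
  \sum_(j < s | (j < i.+1)%N) F j = \sum_(j < s | (j < i)%N) F j + F i.
Proof.
rewrite (bigD1 i) /= ?ltnSn // addrC; congr (_ + _).
apply: eq_bigl => j; rewrite ltnS leq_eqVlt -val_eqE /=.
by case: (ltngtP j i).
Qed.

Section InvariantForm.

Variables (K : numFieldType) (n : nat) (omega : 'cV[K]_n -> 'cV[K]_n -> K).

Hypothesis omega_linear_l :
  forall (a : K) x x' y, omega (a *: x + x') y = a * omega x y + omega x' y.
Hypothesis omega_linear_r :
  forall (a : K) x y y', omega x (a *: y + y') = a * omega x y + omega x y'.

Lemma omegaDl x x' y : omega (x + x') y = omega x y + omega x' y.
Proof. by have := omega_linear_l 1 x x' y; rewrite scale1r mul1r. Qed.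

Lemma omegaDr x y y' : omega x (y + y') = omega x y + omega x y'.
Proof. by have := omega_linear_r 1 x y y'; rewrite scale1r mul1r. Qed.

Lemma omega0l y : omega 0 y = 0.
Proof. by apply: (addrI (omega 0 y)); rewrite -omegaDl !addr0. Qed.

Lemma omega0r x : omega x 0 = 0.
Proof. by apply: (addrI (omega x 0)); rewrite -omegaDr !addr0. Qed.

Lemma omegaZl a x y : omega (a *: x) y = a * omega x y.
Proof. by rewrite -[a *: x]addr0 omega_linear_l omega0l addr0. Qed.

Lemma omegaZr a x y : omega x (a *: y) = a * omega x y.
Proof. by rewrite -[a *: y]addr0 omega_linear_r omega0r addr0. Qed.

Lemma omegaBl x x' y : omega (x - x') y = omega x y - omega x' y.
Proof. by rewrite omegaDl -scaleN1r omegaZl mulN1r. Qed.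

Definition skew (A : 'M[K]_n) : Prop :=
  forall x y, omega (A *m x) y + omega x (A *m y) = 0.

Lemma skew_omega_mulmxr {A} :
  skew A -> forall x y, omega x (A *m y) = - omega (A *m x) y.
Proof. by move=> skewA x y; apply/eqP; rewrite -addr_eq0 addrC skewA. Qed.

Lemma momap_shift A Y c S : skew A ->
  momap omega (Y + c *: (A *m Y)) S =
    momap omega Y S - c * ad_star A (momap omega Y) S
    - c ^+ 2 * U_star A (momap omega Y) S.
Proof.
move=> skewA; rewrite /momap /ad_star /U_star mulmxDr -scalemxAr.
rewrite !omegaDl !omegaDr !omegaZl !omegaZr !(skew_omega_mulmxr skewA).
by rewrite mulmxBl omegaBl !mulmxA; ring.
Qed.

Variables (s : nat) (A : 'I_s -> 'M[K]_n) (a : 'I_s -> K).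
Variables (y0 : 'cV[K]_n) (Yv : 'I_s -> 'cV[K]_n).

Definition stage (k : nat) : 'cV[K]_n :=
  y0 + \sum_(j < s | (j < k)%N) a j *: (A j *m Yv j).

Hypothesis A_skew : forall j, skew (A j).
Hypothesis Yv_stage : forall i, Yv i = stage i + (a i / 2) *: (A i *m Yv i).

Lemma stageE (i : 'I_s) : stage i = Yv i + (- (a i / 2)) *: (A i *m Yv i).
Proof. by rewrite {1}Yv_stage scaleNr addrK. Qed.

Lemma stageS (i : 'I_s) : stage i.+1 = Yv i + (a i / 2) *: (A i *m Yv i).
Proof.
rewrite /stage sum_ord_ltS addrA -/(stage i) stageE -addrA -scalerDl.
have two_neq0 : (2 : K) != 0 by rewrite pnatr_eq0.
by congr (_ + _ *: _); field.
Qed.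

Lemma momap_stage k : (k <= s)%N -> forall S,
  momap omega (stage k) S =
    momap omega y0 S
    - \sum_(j < s | (j < k)%N) a j * ad_star (A j) (momap omega (Yv j)) S.
Proof.
elim: k => [|k IHk] ltks S.
  by rewrite /stage !big_pred0 // addr0 subr0.
pose i := Ordinal ltks.
have := IHk (ltnW ltks) S; rewrite -[k]/(val i) => IH.
rewrite sum_ord_ltS stageS momap_shift // opprD addrA -IH stageE momap_shift //.
have two_neq0 : (2 : K) != 0 by rewrite pnatr_eq0.
by rewrite sqrrN; field.
Qed.

Lemma momap_Yv (i : 'I_s) S :
  momap omega (Yv i) S =
    momap omega (stage i) S - a i / 2 * ad_star (A i) (momap omega (Yv i)) S
    + (a i / 2) ^+ 2 * U_star (A i) (momap omega (Yv i)) S.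
Proof. by rewrite stageE momap_shift // sqrrN; ring. Qed.

End InvariantForm.

Theorem corollary3p9 (K : numFieldType) (n s : nat)
  (g : {vspace 'M[K]_n})
  (omega : 'cV[K]_n -> 'cV[K]_n -> K)
  (alpha : ('M[K]_n -> K) -> 'M[K]_n)
  (b : 'I_s -> K) (h : K)
  (y0 y1 : 'cV[K]_n) (Yv : 'I_s -> 'cV[K]_n) :
  (* g is a Lie subalgebra of gl(Y) *)
  (forall S T, S \in g -> T \in g -> S *m T - T *m S \in g) ->
  (* g is closed under (S,T) |-> T S T *)
  (forall S T, S \in g -> T \in g -> T *m S *m T \in g) ->
  (* omega is bilinear *)
  (forall (a : K) x x' y, omega (a *: x + x') y = a * omega x y + omega x' y) ->
  (forall (a : K) x y y', omega x (a *: y + y') = a * omega x y + omega x y') ->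
  (* g-invariance of omega *)
  (forall T x y, T \in g -> omega (T *m x) y + omega x (T *m y) = 0) ->
  (* alpha : g^* -> g *)
  (forall z, alpha z \in g) ->
  (forall z w, (forall S, S \in g -> z S = w S) -> alpha z = alpha w) ->
  (forall i, b i != 0) ->
  0 < h ->
  (forall i : 'I_s, Yv i = y0 + h *: (\sum_(j < s | (j < i)%N) b j *: vfield omega alpha (Yv j))
                          + (h / 2 * b i) *: vfield omega alpha (Yv i)) ->
  y1 = y0 + h *: (\sum_(i < s) b i *: vfield omega alpha (Yv i)) ->
  (forall i : 'I_s, forall S, S \in g ->
     momap omega (Yv i) S =
       momap omega y0 S
       - h * (\sum_(j < s | (j < i)%N)
                b j * ad_star (alpha (momap omega (Yv j))) (momap omega (Yv j)) S)
       - h / 2 * b i * ad_star (alpha (momap omega (Yv i))) (momap omega (Yv i)) S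
       + h ^+ 2 / 4 * b i ^+ 2 * U_star (alpha (momap omega (Yv i))) (momap omega (Yv i)) S)
  /\
  (forall S, S \in g ->
     momap omega y1 S =
       momap omega y0 S
       - h * (\sum_(i < s)
                b i * ad_star (alpha (momap omega (Yv i))) (momap omega (Yv i)) S)).
Proof.
move=> _ _ linl linr inv_g alpha_g _ _ _ Yv_def ->.
set A := fun j => alpha (momap omega (Yv j)); set a := fun j => h * b j.
have A_skew j : skew omega (A j) by move=> x y; exact: inv_g (alpha_g _).
have stage_def k : stage A a y0 Yv k =
    y0 + h *: \sum_(j < s | (j < k)%N) b j *: vfield omega alpha (Yv j).
  by rewrite /stage scaler_sumr; congr (_ + _); apply: eq_bigr => j _; rewrite scalerA.
have Yv_stage i : Yv i = stage A a y0 Yv i + (a i / 2) *: (A i *m Yv i).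
  by rewrite {1}Yv_def stage_def [h / 2 * _]mulrAC.
have sum_h (P : pred 'I_s) (F : 'I_s -> K) :
    h * \sum_(j < s | P j) b j * F j = \sum_(j < s | P j) a j * F j.
  by rewrite mulr_sumr; apply: eq_bigr => j _; rewrite mulrA.
have full_sum (V : zmodType) (F : 'I_s -> V) :
    \sum_(j < s | (j < s)%N) F j = \sum_(j < s) F j.
  by apply: eq_bigl => j; rewrite ltn_ord.
split=> [i S _ | S _].
  rewrite (momap_Yv linl linr A_skew Yv_stage).
  rewrite (momap_stage linl linr A_skew Yv_stage (ltnW (ltn_ord i))) sum_h.
  by rewrite /a; field.
have := momap_stage linl linr A_skew Yv_stage (leqnn s) S.
by rewrite stage_def !full_sum -sum_h.
Qed.
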